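(* There exist $A_0>1$ and $C_0>0$ such that for every $A\ge A_0$ and every $\xi\in H^1(\mathbb R,\mathbb C)\cap L^2_c$, with $w=\zeta_A\xi$, $$\|w'\|_{L^2}^2-|w(0)|^2\ \ge\ -\frac{C_0}{A^2}\big(\|w'\|_{L^2}^2+|w(0)|^2\big).$$
   Context: $\varphi(x)=2^{-1/2}e^{-|x|/2}$ and $L^2_c=\{u\in L^2(\mathbb R,\mathbb C):\int u\varphi\,dx=0\}$ (the continuous spectral subspace of $H_1=-\partial_x^2-\delta$; note $\|w'\|^2-|w(0)|^2$ is the quadratic form of $H_1$). $\chi:\mathbb R\to[0,1]$ is a fixed even smooth function with $\chi=1$ on $[-1,1]$, $\chi=0$ outside $[-2,2]$, $\chi'\le0$ on $(0,\infty)$. For $A>0$: $\zeta_A(x)=\exp\big(-\frac{|x|}{A}(1-\chi(x))\big)$. *)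

From Stdlib Require Import Reals List.
Open Scope R_scope.

(* A tagged division of [a,b]: list of (tag t, right endpoint c); the left
   endpoint of each piece is the right endpoint of the previous one. *)
Fixpoint tdiv (a b : R) (l : list (R * R)) : Prop :=
  match l with
  | nil => a = b
  | (t, c) :: l' => a <= t <= c /\ tdiv c b l'
  end.

Fixpoint fine (d : R -> R) (a : R) (l : list (R * R)) : Prop :=
  match l with
  | nil => True
  | (t, c) :: l' => t - d t < a /\ c < t + d t /\ fine d c l'
  end.

Fixpoint rsum (f : R -> R) (a : R) (l : list (R * R)) : R :=
  match l with
  | nil => 0
  | (t, c) :: l' => f t * (c - a) + rsum f c l'
  end.

Definition HK_integral (f : R -> R) (a b I : R) : Prop :=
  forall eps, 0 < eps ->
    exists d : R -> R, (forall x, 0 < d x) /\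
      forall l, tdiv a b l -> fine d a l -> Rabs (rsum f a l - I) < eps.

Definition integral_R (f : R -> R) (I : R) : Prop :=
  exists F : R -> R -> R,
    (forall a b, a <= b -> HK_integral f a b (F a b)) /\
    (forall eps, 0 < eps -> exists M, forall a b,
        a <= - M -> M <= b -> Rabs (F a b - I) < eps).

Definition sqnorm (z : R * R) : R := fst z ^ 2 + snd z ^ 2.

Definition L2 (u : R -> R * R) : Prop :=
  exists N, integral_R (fun x => sqnorm (u x)) N.

(* u is (locally) absolutely continuous with derivative g:
   u(y) - u(x) = int_x^y g, componentwise. *)
Definition has_deriv_AC (u g : R -> R * R) : Prop :=
  forall x y, x <= y ->
    HK_integral (fun t => fst (g t)) x y (fst (u y) - fst (u x)) /\
    HK_integral (fun t => snd (g t)) x y (snd (u y) - snd (u x)).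

(* H^1(R, C), via its continuous representative. *)
Definition H1 (u : R -> R * R) : Prop :=
  L2 u /\ exists g, has_deriv_AC u g /\ L2 g.

Definition phi (x : R) : R := / sqrt 2 * exp (- Rabs x / 2).

Definition L2c (u : R -> R * R) : Prop :=
  integral_R (fun x => fst (u x) * phi x) 0 /\
  integral_R (fun x => snd (u x) * phi x) 0.

Definition smooth (f : R -> R) : Prop :=
  exists D : nat -> R -> R, D 0%nat = f /\
    forall n x, derivable_pt_lim (D n) x (D (S n) x).

Definition zeta (chi : R -> R) (A x : R) : R :=
  exp (- (Rabs x / A) * (1 - chi x)).

Definition cutoff_mul (h : R -> R) (u : R -> R * R) : R -> R * R :=
  fun x => (h x * fst (u x), h x * snd (u x)).

From Stdlib Require Import Reals List Lra Psatz ClassicalEpsilon Classical.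
From Coquelicot Require Import Coquelicot.
Open Scope R_scope.

(* We prove the stronger bound 2 |w(0)|^2 <= (15/8) ||w'||^2 for w = zeta_A xi,
   A >= 100, which gives the claim with A0 = 100, C0 = 1.

   Since w = zeta_A xi, the orthogonality of xi to phi says that w is
   orthogonal to the weight rho = sqrt 2 phi / zeta_A, and
   e^{-|t|/2} <= rho(t) <= e^{-b|t|} with b = 1/2 - 1/A.  Write
   w(t) = w(0) + (w(t) - w(0)) with |w(t) - w(0)|^2 <= |t| ||w'||^2 on the
   relevant half-line (Cauchy-Schwarz).  Then on each half-line
     Re <w(0), int w rho> >= 2 |w(0)|^2 - |w(0)| ||w'||_half sqrt (15/2),
   using int_0^oo sqrt s e^{-bs} ds <= sqrt (15/2), which follows from an
   explicit majorant [mf] with closed-form antiderivative.  AM-GM on each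
   half and orthogonality give 4 |w(0)|^2 <= 2 |w(0)|^2 + (15/8) ||w'||^2. *)

Lemma tdiv_le a b l : tdiv a b l -> a <= b.
Proof.
  revert a; induction l as [|[t c] l IH]; simpl; intros a H; [lra|].
  destruct H as [Ht Hl]. specialize (IH _ Hl). lra.
Qed.

Lemma tdiv_app a c b l1 l2 : tdiv a c l1 -> tdiv c b l2 -> tdiv a b (l1 ++ l2).
Proof.
  revert a; induction l1 as [|[t e] l IH]; simpl; intros a H1 H2.
  - subst; auto.
  - destruct H1; split; [auto | eapply IH; eauto].
Qed.

Lemma fine_app d a c l1 l2 :
  tdiv a c l1 -> fine d a l1 -> fine d c l2 -> fine d a (l1 ++ l2).
Proof.
  revert a; induction l1 as [|[t e] l IH]; simpl; intros a H1 F1 F2.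
  - subst; auto.
  - destruct H1, F1 as [? [? ?]]; split; [|split]; eauto.
Qed.

Lemma fine_mono d d' a l : (forall x, d' x <= d x) -> fine d' a l -> fine d a l.
Proof.
  intros Hd; revert a; induction l as [|[t e] l IH]; simpl; intros a F; auto.
  destruct F as [? [? ?]]; specialize (Hd t); repeat split; auto; lra.
Qed.

Lemma fine_min_l d1 d2 a l : fine (fun x => Rmin (d1 x) (d2 x)) a l -> fine d1 a l.
Proof. apply fine_mono; intros; apply Rmin_l. Qed.

Lemma fine_min_r d1 d2 a l : fine (fun x => Rmin (d1 x) (d2 x)) a l -> fine d2 a l.
Proof. apply fine_mono; intros; apply Rmin_r. Qed.

(* Cousin's lemma: every positive gauge admits a fine tagged division of
   [a,b].  This is what makes the gauge integral unique and monotone. *)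
Lemma cousin d a b : (forall x, 0 < d x) -> a <= b -> exists l, tdiv a b l /\ fine d a l.
Proof.
  intros Hd Hab.
  set (E := fun x => a <= x <= b /\ exists l, tdiv a x l /\ fine d a l).
  assert (Ea : E a) by (split; [lra | exists nil; simpl; auto]).
  assert (HbE : bound E) by (exists b; intros x [Hx _]; lra).
  destruct (completeness E HbE (ex_intro _ a Ea)) as [s [Hub Hlub]].
  assert (Has : a <= s) by (apply Hub, Ea).
  assert (Hsb : s <= b) by (apply Hlub; intros x [Hx _]; lra).
  pose proof (Hd s) as Hds.
  (* the supremum itself is reached, by appending the piece [x,s] tagged s *)
  assert (Es : E s).
  { assert (Hx : exists x, E x /\ s - d s < x).
    { apply NNPP; intro Hn.
      assert (Hup : is_upper_bound E (s - d s)).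
      { intros x Ex. apply Rnot_lt_le; intro Hlt. apply Hn; eauto. }
      specialize (Hlub _ Hup). lra. }
    destruct Hx as [x [[Hx [l [Hl Hf]]] Hlt]].
    assert (x <= s) by (apply Hub; split; [lra | eauto]).
    split; [lra|]. exists (l ++ (s, s) :: nil). split.
    - apply tdiv_app with x; auto. simpl. lra.
    - apply fine_app with x; auto. simpl. lra. }
  destruct (Req_dec s b) as [<-|Hne]; [destruct Es as [_ H]; exact H|].
  (* otherwise one could go a little beyond s *)
  exfalso. destruct Es as [_ [l [Hl Hf]]].
  set (y := Rmin b (s + d s / 2)).
  assert (s < y) by (unfold y; apply Rmin_glb_lt; lra).
  assert (y <= b) by apply Rmin_l.
  assert (y <= s + d s / 2) by apply Rmin_r.
  assert (Ey : E y).
  { split; [lra|]. exists (l ++ (s, y) :: nil). split.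
    - apply tdiv_app with s; auto. simpl. lra.
    - apply fine_app with s; auto. simpl. lra. }
  specialize (Hub _ Ey). lra.
Qed.

Lemma rsum_app f a c l1 l2 :
  tdiv a c l1 -> rsum f a (l1 ++ l2) = rsum f a l1 + rsum f c l2.
Proof.
  revert a; induction l1 as [|[t e] l IH]; simpl; intros a H1.
  - subst; ring.
  - destruct H1 as [_ H1]. rewrite (IH _ H1). ring.
Qed.

Lemma rsum_ext f g a l : (forall x, f x = g x) -> rsum f a l = rsum g a l.
Proof.
  intros H; revert a; induction l as [|[t c] l IH]; simpl; intros a; auto.
  rewrite IH, H; auto.
Qed.

Lemma rsum_lin f g al be a l :
  rsum (fun x => al * f x + be * g x) a l = al * rsum f a l + be * rsum g a l.
Proof.
  revert a; induction l as [|[t c] l IH]; simpl; intros a; [ring|].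
  rewrite IH. ring.
Qed.

Lemma rsum_le f g a b l : tdiv a b l -> (forall t, a <= t <= b -> f t <= g t) ->
  rsum f a l <= rsum g a l.
Proof.
  revert a; induction l as [|[t c] l IH]; simpl; intros a H Hfg; [lra|].
  destruct H as [Ht Hl]. pose proof (tdiv_le _ _ _ Hl).
  assert (f t <= g t) by (apply Hfg; lra).
  assert (rsum f c l <= rsum g c l) by (apply IH; auto; intros; apply Hfg; lra).
  assert (f t * (c - a) <= g t * (c - a)) by (apply Rmult_le_compat_r; lra).
  lra.
Qed.

Lemma rsum_nonneg f a b l :
  tdiv a b l -> (forall t, a <= t <= b -> 0 <= f t) -> 0 <= rsum f a l.
Proof.
  intros Hl Hf.
  replace 0 with (rsum (fun _ => 0) a l) by
    (clear; revert a; induction l as [|[t c] l IH]; simpl; intros; [|rewrite IH]; ring).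
  apply (rsum_le _ _ _ b); auto.
Qed.

(* One step of the discrete Cauchy-Schwarz inequality, for a new piece of
   length D carrying the value y. *)
Lemma cauchy_schwarz_step S B y D e : 0 <= B -> 0 <= e -> 0 <= D -> S ^ 2 <= e * B ->
  (y * D + S) ^ 2 <= (D + e) * (y ^ 2 * D + B).
Proof.
  intros HB He HD HS.
  assert (2 * y * S <= B + e * y ^ 2).
  { assert (0 <= B + e * y ^ 2) by nra.
    destruct (Rle_dec (2 * y * S) 0) as [|Hpos]; [lra|].
    assert (0 <= (B - e * y ^ 2) ^ 2) by apply pow2_ge_0.
    apply Rnot_le_lt in Hpos. nra. }
  assert (0 <= D * (y ^ 2 * D)) by nra.
  nra.
Qed.

Lemma rsum_cauchy_schwarz g a b l : tdiv a b l ->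
  (rsum g a l) ^ 2 <= (b - a) * rsum (fun x => g x ^ 2) a l.
Proof.
  revert a; induction l as [|[t c] l IH]; simpl; intros a H; [lra|].
  destruct H as [Ht Hl]. specialize (IH _ Hl). pose proof (tdiv_le _ _ _ Hl).
  assert (0 <= rsum (fun x => g x ^ 2) c l).
  { apply (rsum_nonneg _ _ b); auto. intros; apply pow2_ge_0. }
  replace (b - a) with ((c - a) + (b - c)) by ring.
  apply cauchy_schwarz_step; auto; lra.
Qed.

Lemma le_epsilon_mult x y K : 0 <= K -> (forall eps, 0 < eps -> x <= y + eps * K) -> x <= y.
Proof.
  intros HK H. apply Rnot_lt_le; intro Hlt.
  set (eps := (x - y) / (2 * (K + 1))).
  assert (Heps : 0 < eps) by (apply Rdiv_lt_0_compat; lra).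
  assert (eps * (2 * (K + 1)) = x - y) by (unfold eps; field; lra).
  specialize (H eps Heps). nra.
Qed.

Lemma HK_ext f g a b I : (forall x, f x = g x) -> HK_integral f a b I -> HK_integral g a b I.
Proof.
  intros Hfg HI eps Heps. destruct (HI eps Heps) as [d [Hd Hl]].
  exists d. split; auto. intros l Hdiv Hfine.
  rewrite <- (rsum_ext f g); auto.
Qed.

Lemma HK_lin f g al be a b I J : HK_integral f a b I -> HK_integral g a b J ->
  HK_integral (fun x => al * f x + be * g x) a b (al * I + be * J).
Proof.
  intros HI HJ eps Heps.
  pose proof (Rabs_pos al). pose proof (Rabs_pos be).
  set (e := eps / (2 * (Rabs al + Rabs be + 1))).
  assert (He : 0 < e) by (apply Rdiv_lt_0_compat; lra).
  assert (Hee : e * (2 * (Rabs al + Rabs be + 1)) = eps) by (unfold e; field; lra).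
  destruct (HI e He) as [d1 [Hd1 H1]]. destruct (HJ e He) as [d2 [Hd2 H2]].
  exists (fun x => Rmin (d1 x) (d2 x)). split; [intros; apply Rmin_glb_lt; auto|].
  intros l Hl Fl. rewrite rsum_lin.
  specialize (H1 l Hl (fine_min_l _ _ _ _ Fl)).
  specialize (H2 l Hl (fine_min_r _ _ _ _ Fl)).
  replace (al * rsum f a l + be * rsum g a l - (al * I + be * J)) with
     (al * (rsum f a l - I) + be * (rsum g a l - J)) by ring.
  eapply Rle_lt_trans; [apply Rabs_triang|]. rewrite !Rabs_mult.
  assert (Rabs al * Rabs (rsum f a l - I) <= Rabs al * e)
    by (apply Rmult_le_compat_l; lra).
  assert (Rabs be * Rabs (rsum g a l - J) <= Rabs be * e)
    by (apply Rmult_le_compat_l; lra).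
  nra.
Qed.

(* Monotonicity: compare Riemann sums over one common fine division. *)
Lemma HK_le f g a b I J : a <= b -> HK_integral f a b I -> HK_integral g a b J ->
  (forall t, a <= t <= b -> f t <= g t) -> I <= J.
Proof.
  intros Hab HI HJ Hfg. apply (le_epsilon_mult _ _ 2); [lra|]. intros eps Heps.
  destruct (HI eps Heps) as [d1 [Hd1 H1]]. destruct (HJ eps Heps) as [d2 [Hd2 H2]].
  destruct (cousin (fun x => Rmin (d1 x) (d2 x)) a b) as [l [Hl Fl]]; auto.
  { intros; apply Rmin_glb_lt; auto. }
  specialize (H1 l Hl (fine_min_l _ _ _ _ Fl)).
  specialize (H2 l Hl (fine_min_r _ _ _ _ Fl)).
  pose proof (rsum_le f g a b l Hl Hfg).
  apply Rabs_def2 in H1. apply Rabs_def2 in H2. lra.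
Qed.

(* Additivity over adjacent intervals: concatenate fine divisions. *)
Lemma HK_additive f a c b G I1 I2 : a <= c -> c <= b ->
  HK_integral f a b G -> HK_integral f a c I1 -> HK_integral f c b I2 -> G = I1 + I2.
Proof.
  intros Hac Hcb HG H1 H2.
  assert (Hclose : forall eps, 0 < eps -> Rabs (G - (I1 + I2)) < eps * 3).
  { intros eps Heps.
    destruct (HG eps Heps) as [d [Hd Hdl]].
    destruct (H1 eps Heps) as [d1 [Hd1 H1l]]. destruct (H2 eps Heps) as [d2 [Hd2 H2l]].
    destruct (cousin (fun x => Rmin (d x) (d1 x)) a c) as [l1 [Hl1 Fl1]]; auto.
    { intros; apply Rmin_glb_lt; auto. }
    destruct (cousin (fun x => Rmin (d x) (d2 x)) c b) as [l2 [Hl2 Fl2]]; auto.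
    { intros; apply Rmin_glb_lt; auto. }
    specialize (H1l l1 Hl1 (fine_min_r _ _ _ _ Fl1)).
    specialize (H2l l2 Hl2 (fine_min_r _ _ _ _ Fl2)).
    specialize (Hdl (l1 ++ l2) (tdiv_app _ _ _ _ _ Hl1 Hl2)
      (fine_app _ _ _ _ _ Hl1 (fine_min_l _ _ _ _ Fl1) (fine_min_l _ _ _ _ Fl2))).
    rewrite (rsum_app _ _ _ _ _ Hl1) in Hdl.
    apply Rabs_def2 in H1l. apply Rabs_def2 in H2l. apply Rabs_def2 in Hdl.
    apply Rabs_def1; lra. }
  apply Rle_antisym; apply (le_epsilon_mult _ _ 3); try lra; intros eps Heps;
    specialize (Hclose eps Heps); apply Rabs_def2 in Hclose; lra.
Qed.

(* Squares of approximate values, used to pass Cauchy-Schwarz to the limit. *)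
Lemma square_approx x s e : Rabs (s - x) < e -> x ^ 2 <= s ^ 2 + 2 * Rabs x * e.
Proof.
  intros H. replace (s ^ 2) with (x ^ 2 + 2 * (x * (s - x)) + (s - x) ^ 2) by ring.
  assert (- (x * (s - x)) <= Rabs x * e).
  { eapply Rle_trans; [apply Rle_abs|]. rewrite Rabs_Ropp, Rabs_mult.
    apply Rmult_le_compat_l; [apply Rabs_pos | lra]. }
  assert (0 <= (s - x) ^ 2) by apply pow2_ge_0. lra.
Qed.

Lemma HK_cauchy_schwarz (g : R -> R * R) a b I1 I2 I3 : a <= b ->
  HK_integral (fun t => fst (g t)) a b I1 -> HK_integral (fun t => snd (g t)) a b I2 ->
  HK_integral (fun t => sqnorm (g t)) a b I3 -> I1 ^ 2 + I2 ^ 2 <= (b - a) * I3.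
Proof.
  intros Hab H1 H2 H3. pose proof (Rabs_pos I1). pose proof (Rabs_pos I2).
  apply (le_epsilon_mult _ _ (2 * Rabs I1 + 2 * Rabs I2 + (b - a))); [lra|].
  intros eps Heps.
  destruct (H1 eps Heps) as [d1 [Hd1 H1l]]. destruct (H2 eps Heps) as [d2 [Hd2 H2l]].
  destruct (H3 eps Heps) as [d3 [Hd3 H3l]].
  destruct (cousin (fun x => Rmin (d1 x) (Rmin (d2 x) (d3 x))) a b) as [l [Hl Fl]]; auto.
  { intros; repeat apply Rmin_glb_lt; auto. }
  specialize (H1l l Hl (fine_min_l _ _ _ _ Fl)).
  specialize (H2l l Hl (fine_min_l _ _ _ _ (fine_min_r _ _ _ _ Fl))).
  specialize (H3l l Hl (fine_min_r _ _ _ _ (fine_min_r _ _ _ _ Fl))).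
  pose proof (rsum_cauchy_schwarz (fun t => fst (g t)) a b l Hl) as CS1.
  pose proof (rsum_cauchy_schwarz (fun t => snd (g t)) a b l Hl) as CS2.
  assert (Hsplit : rsum (fun t => sqnorm (g t)) a l =
     1 * rsum (fun t => fst (g t) ^ 2) a l + 1 * rsum (fun t => snd (g t) ^ 2) a l).
  { rewrite <- rsum_lin. apply rsum_ext. intros; unfold sqnorm; ring. }
  pose proof (square_approx _ _ _ H1l). pose proof (square_approx _ _ _ H2l).
  apply Rabs_def2 in H3l.
  assert ((b - a) * rsum (fun t => sqnorm (g t)) a l <= (b - a) * (I3 + eps))
    by (apply Rmult_le_compat_l; lra).
  rewrite Hsplit in *. nra.
Qed.

Lemma derivative_local_error H f x e : derivable_pt_lim H x (f x) -> 0 < e ->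
  exists d, 0 < d /\ forall y, Rabs (y - x) < d ->
    Rabs (H y - H x - f x * (y - x)) <= e * Rabs (y - x).
Proof.
  intros Hd He. destruct (Hd e He) as [del Hdel].
  exists del. split; [apply cond_pos|]. intros y Hy.
  destruct (Req_dec y x) as [->|Hne].
  - replace (H x - H x - f x * (x - x)) with 0 by ring.
    rewrite Rminus_diag, !Rabs_R0. lra.
  - specialize (Hdel (y - x) ltac:(lra) Hy). replace (x + (y - x)) with y in Hdel by ring.
    replace (H y - H x - f x * (y - x)) with ((y - x) * ((H y - H x) / (y - x) - f x))
      by (field; lra).
    rewrite Rabs_mult, Rmult_comm. apply Rmult_le_compat_r; [apply Rabs_pos | lra].
Qed.

Lemma FTC (H f : R -> R) a b : a <= b ->
  (forall x, a <= x <= b -> derivable_pt_lim H x (f x)) -> HK_integral f a b (H b - H a).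
Proof.
  intros Hab Hd eps Heps.
  set (e := eps / (2 * (b - a + 1))).
  assert (He : 0 < e) by (apply Rdiv_lt_0_compat; lra).
  assert (Hee : e * (2 * (b - a + 1)) = eps) by (unfold e; field; lra).
  assert (Hex : forall x, exists d, 0 < d /\ (a <= x <= b -> forall y, Rabs (y - x) < d ->
     Rabs (H y - H x - f x * (y - x)) <= e * Rabs (y - x))).
  { intros x. destruct (classic (a <= x <= b)) as [Hx|Hx].
    - destruct (derivative_local_error H f x e (Hd x Hx) He) as [d [Hd0 Hd1]]. eauto.
    - exists 1. split; [lra | intros; contradiction]. }
  (* the gauge: at each tag, a radius of e-linear approximation *)
  set (d := fun x => proj1_sig (constructive_indefinite_description _ (Hex x))).
  assert (Hdp : forall x, 0 < d x /\ (a <= x <= b -> forall y, Rabs (y - x) < d x ->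
     Rabs (H y - H x - f x * (y - x)) <= e * Rabs (y - x))).
  { intros x. unfold d. destruct (constructive_indefinite_description _ (Hex x)); auto. }
  exists d. split; [intros; apply Hdp|].
  assert (Key : forall l a0, a <= a0 -> tdiv a0 b l -> fine d a0 l ->
     Rabs (rsum f a0 l - (H b - H a0)) <= e * (b - a0)).
  { induction l as [|[t c] l IH]; simpl; intros a0 Ha0 Hl Fl.
    - subst a0. replace (0 - (H b - H b)) with 0 by ring.
      rewrite Rabs_R0, Rminus_diag, Rmult_0_r. lra.
    - destruct Hl as [Ht Hl]. destruct Fl as [F1 [F2 F3]].
      pose proof (tdiv_le _ _ _ Hl).
      specialize (IH c ltac:(lra) Hl F3).
      destruct (Hdp t) as [_ Hloc].
      assert (E1 := Hloc ltac:(lra) c ltac:(rewrite Rabs_right; lra)).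
      assert (E2 := Hloc ltac:(lra) a0 ltac:(rewrite Rabs_left1; lra)).
      rewrite (Rabs_right (c - t)) in E1 by lra. rewrite (Rabs_left1 (a0 - t)) in E2 by lra.
      replace (f t * (c - a0) + rsum f c l - (H b - H a0)) with
        ((H a0 - H t - f t * (a0 - t)) - (H c - H t - f t * (c - t))
         + (rsum f c l - (H b - H c))) by ring.
      eapply Rle_trans; [apply Rabs_triang|].
      eapply Rle_trans; [apply Rplus_le_compat_r; apply Rabs_triang|].
      rewrite Rabs_Ropp. lra. }
  intros l Hl Fl. eapply Rle_lt_trans; [apply Key; auto; lra|]. nra.
Qed.

Lemma HK_nonneg f a b I : a <= b -> HK_integral f a b I ->
  (forall t, a <= t <= b -> 0 <= f t) -> 0 <= I.
Proof.
  intros Hab HI Hf.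
  pose proof (FTC (fun _ => 0) (fun _ => 0) a b Hab
    (fun x _ => derivable_pt_lim_const 0 x)) as H0.
  rewrite Rminus_0_r in H0. exact (HK_le _ _ _ _ _ _ Hab H0 HI Hf).
Qed.

Lemma integral_R_scale f g c I : (forall x, g x = c * f x) ->
  integral_R f I -> integral_R g (c * I).
Proof.
  intros Hg [F [HF Htail]].
  exists (fun a b => c * F a b). split.
  - intros a b Hab. apply (HK_ext (fun x => c * f x + 0 * f x)).
    + intros x. rewrite Hg. ring.
    + replace (c * F a b) with (c * F a b + 0 * F a b) by ring. apply HK_lin; apply HF; auto.
  - intros eps Heps.
    destruct (Htail (eps / (Rabs c + 1))) as [M HM].
    { apply Rdiv_lt_0_compat; [lra | pose proof (Rabs_pos c); lra]. }
    exists M. intros a b Ha Hb. specialize (HM a b Ha Hb).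
    rewrite <- Rmult_minus_distr_l, Rabs_mult.
    pose proof (Rabs_pos c).
    assert (eps / (Rabs c + 1) * (Rabs c + 1) = eps) by (field; lra).
    assert (Rabs c * Rabs (F a b - I) <= Rabs c * (eps / (Rabs c + 1)))
      by (apply Rmult_le_compat_l; lra).
    nra.
Qed.

(* An explicit majorant of sqrt s * exp (- b s) on [0, oo) with a closed-form
   antiderivative: mf b s = d/ds [- exp (- b s) * qf s].  Hence the weighted
   half-line integral of sqrt s is at most qf 0 = sqrt (15/2). *)
Definition qf (s : R) : R := sqrt (9/2 * s + 15/2).
Definition mf (b s : R) : R := exp (- b * s) * (b * qf s - (9/2) / (2 * qf s)).

Lemma sqrt_le_mf b s : 49/100 <= b <= 1/2 -> 0 <= s -> sqrt s * exp (- b * s) <= mf b s.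
Proof.
  intros Hb Hs. unfold mf. rewrite Rmult_comm.
  apply Rmult_le_compat_l; [left; apply exp_pos|].
  unfold qf. set (Q := 9/2 * s + 15/2).
  assert (HQ : 0 < Q) by (unfold Q; lra).
  assert (Hq : 0 < sqrt Q) by (apply sqrt_lt_R0; auto).
  assert (Hqq : sqrt Q * sqrt Q = Q) by (apply sqrt_sqrt; lra).
  (* b sqrt Q - 9/(4 sqrt Q) = X / sqrt Q, and X^2 >= s Q *)
  set (X := b * Q - 9/4).
  assert (HX : 2.205 * s + 1.425 <= X) by (unfold X, Q; nra).
  assert (HX2 : s * Q <= X * X).
  { unfold Q. assert (0 <= (s - 121575/72405) ^ 2) by apply pow2_ge_0. nra. }
  assert (sqrt s * sqrt Q <= X).
  { rewrite <- sqrt_mult by lra. rewrite <- (sqrt_square X) by lra.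
    apply sqrt_le_1; nra. }
  replace (b * sqrt Q - 9 / 2 / (2 * sqrt Q)) with (X / sqrt Q).
  2:{ unfold X. rewrite <- Hqq at 1. field. lra. }
  apply (Rmult_le_reg_r (sqrt Q)); auto. unfold Rdiv. rewrite Rmult_assoc, Rinv_l; lra.
Qed.

(* Antiderivatives of the lower envelopes P e^{-|t|/2} - K mf b |t| on the
   right and on the left half-line. *)
Definition envelope_right (P K b t : R) : R :=
  -2 * P * exp (- t / 2) + K * (exp (- b * t) * qf t).
Definition envelope_left (P K b t : R) : R :=
  2 * P * exp (t / 2) - K * (exp (- b * (- t)) * qf (- t)).

Lemma envelope_right_deriv P K b t : 0 <= t ->
  derivable_pt_lim (envelope_right P K b) t (P * exp (- t / 2) - K * mf b t).
Proof.
  intros Ht. apply is_derive_Reals. unfold envelope_right, mf, qf.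
  assert (0 < sqrt (9 / 2 * t + 15 / 2)) by (apply sqrt_lt_R0; lra).
  auto_derive; [lra | unfold Rdiv; field; lra].
Qed.

Lemma envelope_left_deriv P K b t : t <= 0 ->
  derivable_pt_lim (envelope_left P K b) t (P * exp (t / 2) - K * mf b (- t)).
Proof.
  intros Ht. apply is_derive_Reals. unfold envelope_left, mf, qf.
  assert (0 < sqrt (9 / 2 * - t + 15 / 2)) by (apply sqrt_lt_R0; lra).
  auto_derive; [lra | unfold Rdiv; field; lra].
Qed.

Lemma qf_0 : qf 0 = sqrt (15/2).
Proof. unfold qf. f_equal. ring. Qed.

Lemma exp_pos_mult_nonneg K u v : 0 <= K -> 0 <= K * (exp u * qf v).
Proof.
  intros HK. apply Rmult_le_pos; auto.
  apply Rmult_le_pos; [left; apply exp_pos | apply sqrt_pos].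
Qed.

Lemma right_half_bound f P K b B I : 0 <= B -> 0 <= K -> HK_integral f 0 B I ->
  (forall t, 0 <= t <= B -> P * exp (- t / 2) - K * mf b t <= f t) ->
  2 * P - 2 * P * exp (- B / 2) - K * sqrt (15/2) <= I.
Proof.
  intros HB HK HI Hf.
  pose proof (FTC (envelope_right P K b) _ 0 B HB
    (fun x Hx => envelope_right_deriv P K b x (proj1 Hx))) as HE.
  pose proof (HK_le _ _ _ _ _ _ HB HE HI Hf) as Hle.
  unfold envelope_right in Hle.
  replace (- 0 / 2) with 0 in Hle by field. replace (- b * 0) with 0 in Hle by ring.
  rewrite exp_0, qf_0 in Hle.
  pose proof (exp_pos_mult_nonneg K (- b * B) B HK). lra.
Qed.

Lemma left_half_bound f P K b a I : a <= 0 -> 0 <= K -> HK_integral f a 0 I ->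
  (forall t, a <= t <= 0 -> P * exp (t / 2) - K * mf b (- t) <= f t) ->
  2 * P - 2 * P * exp (a / 2) - K * sqrt (15/2) <= I.
Proof.
  intros Ha HK HI Hf.
  pose proof (FTC (envelope_left P K b) _ a 0 Ha
    (fun x Hx => envelope_left_deriv P K b x (proj2 Hx))) as HE.
  pose proof (HK_le _ _ _ _ _ _ Ha HE HI Hf) as Hle.
  unfold envelope_left in Hle.
  replace (0 / 2) with 0 in Hle by field. replace (- b * - 0) with 0 in Hle by ring.
  replace (- 0) with 0 in Hle by ring.
  rewrite exp_0, qf_0 in Hle.
  pose proof (exp_pos_mult_nonneg K (- b * - a) (- a) HK). lra.
Qed.

Lemma weighted_pointwise p1 p2 v1 v2 r s Fs b :
  49/100 <= b <= 1/2 -> 0 <= s -> 0 <= Fs -> exp (- s / 2) <= r <= exp (- b * s) ->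
  (v1 - p1) ^ 2 + (v2 - p2) ^ 2 <= s * Fs ->
  (p1 ^ 2 + p2 ^ 2) * exp (- s / 2) - sqrt (p1 ^ 2 + p2 ^ 2) * sqrt Fs * mf b s
    <= (p1 * v1 + p2 * v2) * r.
Proof.
  intros Hb Hs HFs [Hr1 Hr2] Hv.
  set (P := p1 ^ 2 + p2 ^ 2).
  assert (HP : 0 <= P) by (unfold P; nra).
  set (pW := p1 * (v1 - p1) + p2 * (v2 - p2)).
  assert (Hpv : p1 * v1 + p2 * v2 = P + pW) by (unfold P, pW; ring).
  assert (HpW2 : pW * pW <= P * (s * Fs)).
  { apply Rle_trans with (P * ((v1 - p1) ^ 2 + (v2 - p2) ^ 2)).
    - unfold pW, P. assert (0 <= (p1 * (v2 - p2) - p2 * (v1 - p1)) ^ 2) by apply pow2_ge_0.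
      nra.
    - apply Rmult_le_compat_l; auto. }
  assert (HpW : - pW <= sqrt P * sqrt Fs * sqrt s).
  { assert (Habs : Rabs pW = sqrt (pW * pW)) by (rewrite <- sqrt_Rsqr_abs; reflexivity).
    assert (sqrt (pW * pW) <= sqrt (P * (s * Fs))) by (apply sqrt_le_1; nra).
    rewrite (sqrt_mult P), (sqrt_mult s) in H by nra.
    pose proof (Rle_abs (- pW)). rewrite Rabs_Ropp in H0. nra. }
  assert (HK : 0 <= sqrt P * sqrt Fs) by (apply Rmult_le_pos; apply sqrt_pos).
  assert (Hm : sqrt s * r <= mf b s).
  { eapply Rle_trans; [|apply sqrt_le_mf; auto].
    apply Rmult_le_compat_l; [apply sqrt_pos | auto]. }
  assert (Hr0 : 0 < r) by (pose proof (exp_pos (- s / 2)); lra).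
  rewrite Hpv.
  assert (pW * r >= - (sqrt P * sqrt Fs * sqrt s) * r) by nra.
  assert (sqrt P * sqrt Fs * (sqrt s * r) <= sqrt P * sqrt Fs * mf b s)
    by (apply Rmult_le_compat_l; auto).
  assert (P * exp (- s / 2) <= P * r) by (apply Rmult_le_compat_l; auto).
  nra.
Qed.

Lemma amgm_window P Fs : 0 <= P -> 0 <= Fs ->
  sqrt P * sqrt Fs * sqrt (15/2) <= P + 15/8 * Fs.
Proof.
  intros HP HFs.
  assert (sqrt (15/2) * sqrt (15/2) = 15/2) by (apply sqrt_sqrt; lra).
  assert (sqrt P * sqrt P = P) by (apply sqrt_sqrt; lra).
  assert (sqrt Fs * sqrt Fs = Fs) by (apply sqrt_sqrt; lra).
  assert (0 <= (sqrt P - sqrt Fs * sqrt (15/2) / 2) ^ 2) by apply pow2_ge_0.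
  nra.
Qed.

Section OrthogonalWindow.

Variables (w g : R -> R * R) (rho : R -> R) (b : R).
Hypothesis Hb : 49/100 <= b <= 1/2.
Hypothesis Hrho : forall t, exp (- Rabs t / 2) <= rho t <= exp (- b * Rabs t).
Hypothesis Hder : has_deriv_AC w g.
Variables F G1 G2 : R -> R -> R.
Hypothesis HF : forall x y, x <= y -> HK_integral (fun t => sqnorm (g t)) x y (F x y).
Hypothesis HG1 : forall x y, x <= y -> HK_integral (fun t => fst (w t) * rho t) x y (G1 x y).
Hypothesis HG2 : forall x y, x <= y -> HK_integral (fun t => snd (w t) * rho t) x y (G2 x y).

Let p1 := fst (w 0).
Let p2 := snd (w 0).
Let P := p1 ^ 2 + p2 ^ 2.

Lemma energy_nonneg x y : x <= y -> 0 <= F x y.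
Proof.
  intros Hxy. apply (HK_nonneg (fun t => sqnorm (g t)) x y); auto.
  intros; unfold sqnorm; nra.
Qed.

Lemma energy_additive x y z : x <= y -> y <= z -> F x z = F x y + F y z.
Proof.
  intros. apply (HK_additive (fun t => sqnorm (g t)) x y z); try apply HF; lra.
Qed.

Lemma increment_bound a c x y : a <= x -> x <= y -> y <= c ->
  (fst (w y) - fst (w x)) ^ 2 + (snd (w y) - snd (w x)) ^ 2 <= (y - x) * F a c.
Proof.
  intros Hax Hxy Hyc. destruct (Hder x y Hxy) as [D1 D2].
  pose proof (HK_cauchy_schwarz g x y _ _ _ Hxy D1 D2 (HF x y Hxy)).
  assert (F x y <= F a c).
  { rewrite (energy_additive a x c), (energy_additive x y c) by lra.
    pose proof (energy_nonneg a x Hax). pose proof (energy_nonneg y c Hyc). lra. }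
  assert ((y - x) * F x y <= (y - x) * F a c) by (apply Rmult_le_compat_l; lra).
  lra.
Qed.

Lemma sqrt_energy_nonneg x y : 0 <= sqrt P * sqrt (F x y).
Proof. apply Rmult_le_pos; apply sqrt_pos. Qed.

Let f := fun t => p1 * (fst (w t) * rho t) + p2 * (snd (w t) * rho t).

Lemma f_integral x y : x <= y -> HK_integral f x y (p1 * G1 x y + p2 * G2 x y).
Proof.
  intros Hxy. apply (HK_lin (fun t => fst (w t) * rho t) (fun t => snd (w t) * rho t)); auto.
Qed.

Lemma f_above_envelope t Fs : 0 <= Fs ->
  (fst (w t) - p1) ^ 2 + (snd (w t) - p2) ^ 2 <= Rabs t * Fs ->
  P * exp (- Rabs t / 2) - sqrt P * sqrt Fs * mf b (Rabs t) <= f t.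
Proof.
  intros HFs Hinc. unfold f.
  replace (p1 * (fst (w t) * rho t) + p2 * (snd (w t) * rho t))
    with ((p1 * fst (w t) + p2 * snd (w t)) * rho t) by ring.
  apply weighted_pointwise; auto. apply Rabs_pos.
Qed.

(* Integrate the envelope on [0,B] and on [a,0], then absorb the cross
   terms by AM-GM using the energies F 0 B and F a 0 separately. *)
Lemma window_estimate a B : a <= 0 -> 0 <= B ->
  P * (2 - 2 * exp (a / 2) - 2 * exp (- B / 2))
    <= p1 * G1 a B + p2 * G2 a B + 15/8 * F a B.
Proof.
  intros Ha HB.
  assert (HP : 0 <= P) by (unfold P; nra).
  assert (Right : 2 * P - 2 * P * exp (- B / 2) - sqrt P * sqrt (F 0 B) * sqrt (15/2)
                  <= p1 * G1 0 B + p2 * G2 0 B).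
  { apply (right_half_bound f P _ b B); auto using f_integral, sqrt_energy_nonneg.
    intros t Ht. rewrite <- (Rabs_right t) at 1 2 by lra.
    apply f_above_envelope; [apply energy_nonneg; lra|].
    rewrite Rabs_right by lra. replace t with (t - 0) at 3 by ring.
    apply increment_bound; lra. }
  assert (Left : 2 * P - 2 * P * exp (a / 2) - sqrt P * sqrt (F a 0) * sqrt (15/2)
                 <= p1 * G1 a 0 + p2 * G2 a 0).
  { apply (left_half_bound f P _ b a); auto using f_integral, sqrt_energy_nonneg.
    intros t Ht.
    replace (t / 2) with (- Rabs t / 2) by (rewrite Rabs_left1 by lra; field).
    replace (- t) with (Rabs t) by (rewrite Rabs_left1 by lra; ring).
    apply f_above_envelope; [apply energy_nonneg; lra|].
    rewrite Rabs_left1 by lra. replace (- t) with (0 - t) by ring.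
    replace ((fst (w t) - p1) ^ 2 + (snd (w t) - p2) ^ 2)
      with ((fst (w 0) - fst (w t)) ^ 2 + (snd (w 0) - snd (w t)) ^ 2)
      by (unfold p1, p2; ring).
    apply increment_bound; lra. }
  rewrite (energy_additive a 0 B Ha HB).
  rewrite (HK_additive _ a 0 B _ _ _ Ha HB (HG1 a B ltac:(lra)) (HG1 a 0 Ha) (HG1 0 B HB)).
  rewrite (HK_additive _ a 0 B _ _ _ Ha HB (HG2 a B ltac:(lra)) (HG2 a 0 Ha) (HG2 0 B HB)).
  pose proof (amgm_window P (F a 0) HP (energy_nonneg a 0 Ha)).
  pose proof (amgm_window P (F 0 B) HP (energy_nonneg 0 B HB)).
  lra.
Qed.

End OrthogonalWindow.

Definition for_large (Q : R -> Prop) : Prop := exists M, forall x, M <= x -> Q x.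

Lemma for_large_and Q1 Q2 : for_large Q1 -> for_large Q2 -> for_large (fun x => Q1 x /\ Q2 x).
Proof.
  intros [M1 H1] [M2 H2]. exists (Rmax M1 M2). intros x Hx.
  split; [apply H1 | apply H2]; eapply Rle_trans; eauto; [apply Rmax_l | apply Rmax_r].
Qed.

Lemma for_large_witness Q : for_large Q -> exists x, 0 <= x /\ Q x.
Proof.
  intros [M HM]. exists (Rmax M 0). split; [apply Rmax_r | apply HM, Rmax_l].
Qed.

Lemma integral_R_window f I : integral_R f I ->
  exists F : R -> R -> R, (forall a b, a <= b -> HK_integral f a b (F a b)) /\
    forall eps, 0 < eps -> for_large (fun M => Rabs (F (- M) M - I) < eps).
Proof.
  intros [F [HF Htail]]. exists F. split; auto. intros eps Heps.
  destruct (Htail eps Heps) as [M HM]. exists M. intros x Hx. apply HM; lra.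
Qed.

Lemma exp_tail_small eps : 0 < eps -> for_large (fun M => exp (- M / 2) <= eps).
Proof.
  intros Heps. exists (2 / eps). intros M HM.
  assert (H2e : 0 < 2 / eps) by (apply Rdiv_lt_0_compat; lra).
  assert (Hex : 1 / eps <= exp (M / 2)).
  { pose proof (exp_ineq1_le (M / 2)).
    assert (1 / eps = (2 / eps) / 2) by (field; lra). lra. }
  replace (- M / 2) with (- (M / 2)) by field. rewrite exp_Ropp.
  pose proof (exp_pos (M / 2)).
  apply (Rmult_le_reg_l (exp (M / 2))); auto. rewrite Rinv_r by lra.
  apply (Rmult_le_compat_r eps) in Hex; [|lra].
  replace (1 / eps * eps) with 1 in Hex by (field; lra). lra.
Qed.

Lemma mult_le_abs_eps p G eps : Rabs G < eps -> p * G <= Rabs p * eps.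
Proof.
  intros HG. eapply Rle_trans; [apply Rle_abs|]. rewrite Rabs_mult.
  apply Rmult_le_compat_l; [apply Rabs_pos | lra].
Qed.

Lemma orthogonal_point_bound (w g : R -> R * R) (rho : R -> R) (b N : R) :
  49/100 <= b <= 1/2 ->
  (forall t, exp (- Rabs t / 2) <= rho t <= exp (- b * Rabs t)) ->
  has_deriv_AC w g -> integral_R (fun t => sqnorm (g t)) N ->
  integral_R (fun t => fst (w t) * rho t) 0 -> integral_R (fun t => snd (w t) * rho t) 0 ->
  2 * sqnorm (w 0) <= 15/8 * N.
Proof.
  intros Hb Hrho Hder HN HG1 HG2.
  destruct (integral_R_window _ _ HN) as [F [HF HFt]].
  destruct (integral_R_window _ _ HG1) as [G1 [HG1l HG1t]].
  destruct (integral_R_window _ _ HG2) as [G2 [HG2l HG2t]].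
  set (p1 := fst (w 0)). set (p2 := snd (w 0)).
  change (sqnorm (w 0)) with (p1 ^ 2 + p2 ^ 2).
  assert (HP : 0 <= p1 ^ 2 + p2 ^ 2) by nra.
  pose proof (Rabs_pos p1). pose proof (Rabs_pos p2).
  apply (le_epsilon_mult _ _ (4 * (p1 ^ 2 + p2 ^ 2) + Rabs p1 + Rabs p2 + 15/8)); [lra|].
  intros eps Heps.
  destruct (for_large_witness _ (for_large_and _ _ (HFt eps Heps)
    (for_large_and _ _ (HG1t eps Heps) (for_large_and _ _ (HG2t eps Heps)
      (exp_tail_small eps Heps))))) as [M [HM [HFM [HG1M [HG2M Hexp]]]]].
  pose proof (window_estimate w g rho b Hb Hrho Hder F G1 G2 HF HG1l HG2l (- M) M
    ltac:(lra) HM) as Hwin.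
  rewrite Rminus_0_r in HG1M, HG2M.
  pose proof (mult_le_abs_eps p1 _ _ HG1M). pose proof (mult_le_abs_eps p2 _ _ HG2M).
  apply Rabs_def2 in HFM.
  assert ((p1 ^ 2 + p2 ^ 2) * exp (- M / 2) <= (p1 ^ 2 + p2 ^ 2) * eps)
    by (apply Rmult_le_compat_l; auto).
  fold p1 p2 in Hwin. lra.
Qed.

Lemma exp_monotone x y : x <= y -> exp x <= exp y.
Proof.
  intros H. destruct (Req_dec x y) as [->|]; [lra|]. left; apply exp_increasing; lra.
Qed.

(* The weight sqrt 2 * phi / zeta_A, written out. *)
Definition cutoff_weight (chi : R -> R) (A t : R) : R :=
  exp (- Rabs t / 2 + Rabs t / A * (1 - chi t)).

(* Since 0 <= 1 - chi <= 1, the weight lies between e^{-|t|/2} and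
   e^{-(1/2 - 1/A)|t|}, and 1/2 - 1/A is close to 1/2 for A >= 100. *)
Lemma cutoff_weight_bounds chi A t : 100 <= A -> 0 <= chi t <= 1 ->
  exp (- Rabs t / 2) <= cutoff_weight chi A t <= exp (- (1/2 - 1/A) * Rabs t).
Proof.
  intros HA Hchi. unfold cutoff_weight.
  pose proof (Rabs_pos t).
  assert (Hs : 0 <= Rabs t / A) by (apply Rdiv_le_0_compat; lra).
  replace (- (1/2 - 1/A) * Rabs t) with (- Rabs t / 2 + Rabs t / A) by (field; lra).
  split; apply exp_monotone; nra.
Qed.

Lemma cutoff_weight_exponent A : 100 <= A -> 49/100 <= 1/2 - 1/A <= 1/2.
Proof.
  intros HA. assert (0 < 1 / A) by (apply Rdiv_lt_0_compat; lra).
  assert (1 / A <= 1/100) by (apply Rmult_le_reg_r with A; [lra|]; field_simplify; lra).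
  lra.
Qed.

Lemma cutoff_weight_product chi A u t :
  zeta chi A t * u * cutoff_weight chi A t = sqrt 2 * (u * phi t).
Proof.
  unfold zeta, cutoff_weight, phi.
  assert (sqrt 2 <> 0) by (apply Rgt_not_eq, sqrt_lt_R0; lra).
  rewrite <- (Rmult_comm u), Rmult_assoc, <- exp_plus.
  replace (- (Rabs t / A) * (1 - chi t) + (- Rabs t / 2 + Rabs t / A * (1 - chi t)))
    with (- Rabs t / 2) by ring.
  field; auto.
Qed.

Theorem claim2p5 :
  forall (chi : R -> R),
    smooth chi ->
    (forall x, 0 <= chi x <= 1) ->
    (forall x, chi (- x) = chi x) ->
    (forall x, -1 <= x <= 1 -> chi x = 1) ->
    (forall x, 2 < Rabs x -> chi x = 0) ->
    (forall x l, 0 < x -> derivable_pt_lim chi x l -> l <= 0) ->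
  exists A0 C0 : R, 1 < A0 /\ 0 < C0 /\
    forall (A : R) (xi : R -> R * R),
      A0 <= A -> H1 xi -> L2c xi ->
      forall (gw : R -> R * R) (N : R),
        has_deriv_AC (cutoff_mul (zeta chi A) xi) gw ->
        integral_R (fun x => sqnorm (gw x)) N ->
        N - sqnorm (cutoff_mul (zeta chi A) xi 0)
          >= - (C0 / A ^ 2) * (N + sqnorm (cutoff_mul (zeta chi A) xi 0)).
Proof.
  intros chi _ Hchi _ _ _ _.
  exists 100, 1. split; [lra|]. split; [lra|].
  intros A xi HA _ [Hxi1 Hxi2] gw N Hder HN.
  set (w := cutoff_mul (zeta chi A) xi) in *.
  (* orthogonality of xi to phi is orthogonality of w to the cutoff weight *)
  assert (Hw1 : integral_R (fun t => fst (w t) * cutoff_weight chi A t) 0).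
  { rewrite <- (Rmult_0_r (sqrt 2)). apply (integral_R_scale _ _ _ _ ltac:(
      intros t; apply cutoff_weight_product) Hxi1). }
  assert (Hw2 : integral_R (fun t => snd (w t) * cutoff_weight chi A t) 0).
  { rewrite <- (Rmult_0_r (sqrt 2)). apply (integral_R_scale _ _ _ _ ltac:(
      intros t; apply cutoff_weight_product) Hxi2). }
  pose proof (orthogonal_point_bound w gw (cutoff_weight chi A) (1/2 - 1/A) N
    (cutoff_weight_exponent A HA) (fun t => cutoff_weight_bounds chi A t HA (Hchi t))
    Hder HN Hw1 Hw2) as Hpoint.
  (* hence |w(0)|^2 <= N, which is stronger than the claim *)
  assert (HP : 0 <= sqnorm (w 0)) by (unfold sqnorm; nra).
  assert (0 <= 1 / A ^ 2) by (apply Rdiv_le_0_compat; [lra | apply pow_lt; lra]).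
  assert (0 <= 1 / A ^ 2 * (N + sqnorm (w 0))) by (apply Rmult_le_pos; lra).
  lra.
Qed.
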